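(* Let $G=(V,E)$ be an undirected graph with $n$ vertices and non-negative edge weights of maximum value $W$, let $K$ be a positive integer and $\varepsilon>0$. Let $B\subseteq V$ be obtained by including each vertex independently with probability $C\log(n)/K$, for a sufficiently large constant $C>0$. Consider the oracle that, on query $(s,t)$, returns $+\infty$ if $s$ and $t$ are in different connected components and otherwise returns $\min(\widehat d_1,\widehat d_2)$, where $\widehat d_1=\min\{d_{1/\varepsilon}(s,v)+d_{1/\varepsilon}(v,t): v\in A_{1/\varepsilon}(s)\cap A_{1/\varepsilon}(t)\}$ and $\widehat d_2=\min\{d(s,p(v))+d(p(v),t): v\in A_{1/\varepsilon}(s)\cup A_{1/\varepsilon}(t)\}$. Then with high probability, simultaneously for all queries $(s,t)\in V^2$, the returned value $\widehat d(s,t)$ satisfies $d(s,t)\le \widehat d(s,t)\le (1+\varepsilon)\,d(s,t)+2W$.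
   Context: $d(u,v)$ is the weighted distance in $G$. $K[v]$ is a set of the $K$ vertices closest to $v$ (including $v$; ties arbitrary). $H$ is the auxiliary graph on $V$ with, for each $v$, an edge (hop) from $v$ to each $v'\in K[v]\setminus\{v\}$ of weight $d(v,v')$, hops from $v$ going only to elements of $K[v]$. $A_{1/\varepsilon}(x)$ is the set of vertices reachable from $x$ in $H$ with at most $\lceil 1/\varepsilon\rceil$ hops. For $v\in A_{1/\varepsilon}(s)$, $d_{1/\varepsilon}(s,v)$ is the minimum total weight of a walk in $H$ from $s$ to $v$ with at most $\lceil1/\varepsilon\rceil$ hops; for $v\in A_{1/\varepsilon}(t)$, $d_{1/\varepsilon}(v,t)$ is the minimum total weight of such a walk from $t$ to $v$. $p(v)\in B$ denotes a pivot in $B$ closest to $v$ in $G$. ''With high probability'' means with probability at least $1-n^{-c}$ for some constant $c>0$. *)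

From HB Require Import structures.
From mathcomp Require Import all_boot all_order all_algebra.
From mathcomp Require Import all_classical all_reals all_analysis.
Set Implicit Arguments. Unset Strict Implicit. Unset Printing Implicit Defensive.
Import Order.TTheory GRing.Theory Num.Theory.
Local Open Scope ring_scope.
Local Open Scope classical_set_scope.

Section Defs.
Variables (R : realType) (V : finType).

(* total weight of the walk u = x0, x1, ..., xk = last u p, where p = [x1;...;xk] *)
Definition walk_weight (w : V -> V -> R) (u : V) (p : seq V) : R :=
  \sum_(e <- zip (u :: p) p) w e.1 e.2.

Definition dist (adj : rel V) (w : V -> V -> R) (u v : V) : \bar R :=
  ereal_inf [set (walk_weight w u p)%:E | p in [set p | path adj u p /\ last u p = v]].

Definition valid_Kset (adj : rel V) (w : V -> V -> R) (K : nat) (Ks : V -> {set V}) :=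
  forall v, [/\ v \in Ks v, #|Ks v| = minn K #|V| &
     forall x y, x \in Ks v -> y \notin Ks v -> (dist adj w v x <= dist adj w v y)%E].

Definition hop (Ks : V -> {set V}) : rel V := fun x y => (y \in Ks x) && (y != x).

Definition hwalk_weight adj w (x : V) (p : seq V) : \bar R :=
  (\sum_(e <- zip (x :: p) p) dist adj w e.1 e.2)%E.

Definition hwalks (Ks : V -> {set V}) (eps : R) (x : V) : set (seq V) :=
  [set p | path (hop Ks) x p /\ ((size p)%:Z <= Num.ceil (eps^-1))%R].

Definition Aset Ks eps (x : V) : set V := [set last x p | p in hwalks Ks eps x].

Definition dH adj w Ks eps (x v : V) : \bar R :=
  ereal_inf [set hwalk_weight adj w x p | p in [set p | hwalks Ks eps x p /\ last x p = v]].

Definition valid_pivot adj w (B : {set V}) (p : V -> option V) :=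
  forall v, match p v with
            | None => B = finset.set0
            | Some b => b \in B /\ forall b', b' \in B -> (dist adj w v b <= dist adj w v b')%E
            end.

Definition dpiv adj w (p : V -> option V) (x v : V) : \bar R :=
  if p v is Some b then dist adj w x b else +oo%E.

Definition dhat1 adj w Ks eps (s t : V) : \bar R :=
  ereal_inf [set (dH adj w Ks eps s v + dH adj w Ks eps t v)%E
            | v in Aset Ks eps s `&` Aset Ks eps t].

Definition dhat2 adj w Ks eps p (s t : V) : \bar R :=
  ereal_inf [set (dpiv adj w p s v + dpiv adj w p t v)%E
            | v in Aset Ks eps s `|` Aset Ks eps t].

Definition oracle adj w Ks eps p (s t : V) : \bar R :=
  if connect adj s t then Order.min (dhat1 adj w Ks eps s t) (dhat2 adj w Ks eps p s t)
  else +oo%E.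

Definition good_event adj w Ks eps (W : R) (B : {set V}) : Prop :=
  forall p, valid_pivot adj w B p -> forall s t : V,
    (dist adj w s t <= oracle adj w Ks eps p s t)%E /\
    (oracle adj w Ks eps p s t <= (1 + eps)%:E * dist adj w s t + (2 * W)%:E)%E.

(* probability that B, obtained by including each vertex independently with
   probability q, satisfies the predicate E *)
Definition sample_prob (q : R) (E : {set V} -> Prop) : R :=
  \sum_(B : {set V}) (if `[< E B >] then q ^+ #|B| * (1 - q) ^+ (#|V| - #|B|) else 0).

End Defs.

(** Call B good if every K-set other than V contains a vertex of B.  A fixed
    proper K[x] has K elements, so it misses B with probability at most
    (1 - q)^K <= n^-C, and by a union bound B is good with probability at
    least 1 - n^(1-C).

    For a good B the lower bound d <= dhat is the triangle inequality.  For
    the upper bound take a walk s = v_0, ..., v_m = t of length L close to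
    d(s,t) and let k = ceil(1/eps).  Starting at s, repeatedly hop to the
    farthest later vertex of the walk whose prefix stays in K of the current
    vertex; after k hops a prefix of the walk lies in A(s), with d_(1/eps)
    bounded by the length along the walk; symmetrically from t.  If the two
    covered parts meet, dhat_1 <= L.  Otherwise the 2k hops have total length
    at most L, so some hop from a vertex x has length at most
    delta = L / (2k); the walk vertex right after it lies outside K[x] within
    distance delta + W of x, hence so does the pivot of x, and
    dhat_2 <= L + 2 (delta + W) <= (1 + eps) L + 2 W. *)

From HB Require Import structures.
From mathcomp Require Import all_boot all_order all_algebra.
From mathcomp Require Import all_classical all_reals all_analysis.
From mathcomp Require Import zify ring lra.
Set Implicit Arguments. Unset Strict Implicit. Unset Printing Implicit Defensive.
Import Order.TTheory GRing.Theory Num.Theory.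
Local Open Scope ring_scope.
Local Open Scope classical_set_scope.

Lemma exists_small_step (R : realDomainType) (h : nat -> R) (delta : R) k :
  (0 < k)%N -> h k - h 0%N <= k%:R * delta -> exists2 i, (i < k)%N & h i.+1 - h i <= delta.
Proof.
move=> k_gt0; apply: contraPP => no_small; apply/negP; rewrite -ltNge.
rewrite -(telescope_sumr _ (leq0n k)) mulr_natl -[in delta *+ k](subn0 k) -sumr_const_nat.
apply: ltr_sum_nat => // i /andP[_ ik]; rewrite ltNge; apply/negP => small.
by apply: no_small; exists i.
Qed.

Fixpoint extend_while (P : pred nat) (j n : nat) : nat :=
  if n is n'.+1 then (if P j.+1 then extend_while P j.+1 n' else j) else j.

Lemma extend_while_bounds P j n : (j <= extend_while P j n <= j + n)%N.
Proof.
elim: n j => [|n IH] j /=; first by rewrite addn0 leqnn.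
by case: ifP => _; [have := IH j.+1; lia | lia].
Qed.

Lemma extend_while_holds P j n r : (j < r <= extend_while P j n)%N -> P r.
Proof.
elim: n j => [|n IH] j /=; first by lia.
case: ifP => Pj; last by lia.
by have [-> //|/eqP ne /andP[jr rn]] := eqVneq r j.+1; apply: (IH j.+1); lia.
Qed.

Lemma extend_while_stop P j n :
  (extend_while P j n < j + n)%N -> ~~ P (extend_while P j n).+1.
Proof.
elim: n j => [|n IH] j /=; first by rewrite addn0 ltnn.
by case: ifP => [_ lt|/negbT //]; apply: IH; rewrite addSnnS.
Qed.

Section Distances.
Variables (R : realType) (V : finType) (adj : rel V) (w : V -> V -> R).
Hypothesis adj_sym : symmetric adj.
Hypothesis w_sym : forall u v, adj u v -> w u v = w v u.
Hypothesis w_ge0 : forall u v, adj u v -> 0 <= w u v.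

Local Notation d := (dist adj w).

Lemma walk_weight_cons u x p :
  walk_weight w u (x :: p) = w u x + walk_weight w x p.
Proof. by rewrite /walk_weight big_cons. Qed.

Lemma walk_weight_cat u p1 p2 :
  walk_weight w u (p1 ++ p2) = walk_weight w u p1 + walk_weight w (last u p1) p2.
Proof.
elim: p1 u => [|x p1 IH] u /=; first by rewrite /walk_weight big_nil add0r.
by rewrite !walk_weight_cons IH addrA.
Qed.

Lemma walk_weight_rcons u p x :
  walk_weight w u (rcons p x) = walk_weight w u p + w (last u p) x.
Proof.
by rewrite -cats1 walk_weight_cat walk_weight_cons /walk_weight big_nil addr0.
Qed.

Lemma walk_weight_ge0 u p : path adj u p -> 0 <= walk_weight w u p.
Proof.
elim: p u => [|x p IH] u /=; first by rewrite /walk_weight big_nil.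
by case/andP=> ux px; rewrite walk_weight_cons addr_ge0 ?w_ge0 ?IH.
Qed.

Lemma dist_le_walk u p : path adj u p -> (d u (last u p) <= (walk_weight w u p)%:E)%E.
Proof. by move=> pp; apply: ereal_inf_lbound; exists p. Qed.

Lemma dist_ge0 u v : (0 <= d u v)%E.
Proof.
apply: le_ereal_inf_tmp => _ [p [pp _] <-].
by rewrite lee_fin walk_weight_ge0.
Qed.

Lemma dist_approx u v r e : d u v = r%:E -> 0 < e ->
  exists p, [/\ path adj u p, last u p = v & walk_weight w u p < r + e].
Proof.
move=> duv e0; have : (d u v < (r + e)%:E)%E by rewrite duv lte_fin ltrDl.
by case/ereal_inf_lt => _ [p [pp lp] <-]; rewrite lte_fin; exists p.
Qed.

Lemma connect_dist u v : connect adj u v = (d u v < +oo)%E.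
Proof.
apply/connectP/idP => [[p pp ->]|].
  by apply: le_lt_trans (dist_le_walk pp) _; apply: ltry.
by case/ereal_inf_lt => y [p [pp lp] _] _; exists p.
Qed.

Lemma dist_triangle u v x : (d u x <= d u v + d v x)%E.
Proof.
move: (dist_ge0 u v) (dist_ge0 v x).
case Euv: (d u v) => [r1| |] //; case Evx: (d v x) => [r2| |] // _ _; rewrite ?leey //.
apply/lee_addgt0Pr => e e0; have e20 : 0 < e / 2 by rewrite divr_gt0.
have [p1 [pp1 lp1 w1]] := dist_approx Euv e20.
have [p2 [pp2 lp2 w2]] := dist_approx Evx e20.
have := dist_le_walk (u := u) (p := p1 ++ p2).
rewrite cat_path pp1 lp1 pp2 last_cat lp1 lp2 => /(_ isT).
move/le_trans; apply; rewrite walk_weight_cat lp1 lee_fin; lra.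
Qed.

Lemma walk_rev u p : path adj u p -> exists2 q,
  path adj (last u p) q & last (last u p) q = u /\ walk_weight w (last u p) q = walk_weight w u p.
Proof.
elim: p u => [|x p IH] u /=; first by exists [::].
case/andP=> ux /IH [q pq [lq wq]]; exists (rcons q u).
  by rewrite rcons_path pq lq adj_sym.
by rewrite last_rcons walk_weight_rcons lq wq walk_weight_cons (w_sym ux) addrC.
Qed.

Lemma dist_sym u v : d u v = d v u.
Proof.
suff le_sym x y : (d y x <= d x y)%E by apply/le_anti; rewrite !le_sym.
apply: le_ereal_inf_tmp => _ [p [pp <-] <-].
by have [q pq [lq <-]] := walk_rev pp; have := dist_le_walk pq; rewrite lq.
Qed.

Lemma last_take (x : V) q i : (i <= size q)%N -> last x (take i q) = nth x (x :: q) i.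
Proof. by case: i => [|i] // iq; rewrite (last_nth x) size_takel //= nth_take. Qed.

Lemma dist_le_subwalk u q : path adj u q -> forall i j, (i <= j <= size q)%N ->
  (d (nth u (u :: q) i) (nth u (u :: q) j) <=
   (walk_weight w u (take j q) - walk_weight w u (take i q))%:E)%E.
Proof.
move=> pq i j /andP[ij jq]; have := take_path j pq.
rewrite -!last_take ?(leq_trans ij) // -(cat_take_drop i (take j q)) take_takel //.
rewrite cat_path last_cat walk_weight_cat addrAC subrr add0r => /andP[_].
exact: dist_le_walk.
Qed.

Section HopWalks.
Variable Ks : V -> {set V}.

Lemma hwalk_weight_rcons x p y :
  hwalk_weight adj w x (rcons p y) = (hwalk_weight adj w x p + d (last x p) y)%E.
Proof.
elim: p x => [|z p IH] x /=; first by rewrite /hwalk_weight big_cons !big_nil add0e adde0.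
by rewrite /hwalk_weight /= !big_cons -/(hwalk_weight _ _ _ _) IH addeA.
Qed.

Lemma dist_le_hwalk x p : (d x (last x p) <= hwalk_weight adj w x p)%E.
Proof.
elim/last_ind: p => [|p y IH].
  by have := dist_le_walk (u := x) (p := [::]) isT; rewrite /hwalk_weight /walk_weight !big_nil.
rewrite hwalk_weight_rcons last_rcons; apply: le_trans (dist_triangle _ (last x p) _) _.
exact: leeD2r.
Qed.

Lemma dist_le_dH eps x v : (d x v <= dH adj w Ks eps x v)%E.
Proof. by apply: le_ereal_inf_tmp => _ [p [_ <-] <-]; apply: dist_le_hwalk. Qed.

Definition hop_reach (x : V) (i : nat) (y : V) (c : R) : Prop :=
  exists p, [/\ path (hop Ks) x p, (size p <= i)%N, last x p = y &
                (hwalk_weight adj w x p <= c%:E)%E].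

Lemma hop_reach_refl x : hop_reach x 0 x 0.
Proof. by exists [::]; rewrite /hwalk_weight big_nil. Qed.

Lemma hop_reach_le x i j y c : (i <= j)%N -> hop_reach x i y c -> hop_reach x j y c.
Proof. by move=> ij [p [pp sp lp wp]]; exists p; split=> //; apply: leq_trans ij. Qed.

Lemma hop_reach_step x i y c z c' : hop_reach x i y c -> z \in Ks y ->
  (d y z <= (c' - c)%:E)%E -> hop_reach x i.+1 z c'.
Proof.
move=> [p [pp sp <- wp]] zK dz.
have wc : (hwalk_weight adj w x p + d (last x p) z <= c'%:E)%E.
  by rewrite -(subrKC c c') EFinD leeD.
have [zl|zl] := eqVneq z (last x p).
  exists p; split=> //; [exact: leqW | apply: le_trans wc].
  by rewrite leeDl // dist_ge0.
exists (rcons p z); split; rewrite ?size_rcons ?last_rcons ?hwalk_weight_rcons //.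
by rewrite rcons_path pp /hop zK zl.
Qed.

Definition max_hops (eps : R) : nat := `|Num.ceil eps^-1|%N.

Section MaxHops.
Variable eps : R.
Hypothesis eps_gt0 : 0 < eps.

Lemma max_hopsE : (max_hops eps)%:Z = Num.ceil eps^-1.
Proof. by rewrite /max_hops gez0_abs // ceil_ge0 (lt_le_trans (ltrN10 R)) ?invr_ge0 ?ltW. Qed.

Lemma max_hops_gt0 : (0 < max_hops eps)%N.
Proof. by rewrite -(ltz_nat 0) max_hopsE ceil_gt0 invr_gt0. Qed.

Lemma max_hops_mul_ge1 : 1 <= (max_hops eps)%:R * eps.
Proof.
rewrite -ler_pdivrMr // div1r (le_trans (ceil_ge _)) //.
by rewrite -max_hopsE.
Qed.

Lemma hop_reach_Aset x y c : hop_reach x (max_hops eps) y c ->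
  Aset Ks eps x y /\ (dH adj w Ks eps x y <= c%:E)%E.
Proof.
move=> [p [pp sp lp wp]].
have hp : hwalks Ks eps x p by split; rewrite // -max_hopsE lez_nat.
split; first by exists p.
by apply: le_trans wp; apply: ereal_inf_lbound; exists p.
Qed.

Lemma dhat1_le_hop_reach s t v c1 c2 :
  hop_reach s (max_hops eps) v c1 -> hop_reach t (max_hops eps) v c2 ->
  (dhat1 adj w Ks eps s t <= (c1 + c2)%:E)%E.
Proof.
move=> /hop_reach_Aset[As Hs] /hop_reach_Aset[At Ht].
by apply: le_trans (ereal_inf_lbound _) _; [exists v => //; split | rewrite EFinD; exact: leeD].
Qed.

End MaxHops.

Definition exits_Kset_within (x : V) (h : R) : Prop :=
  exists2 y, y \notin Ks x & (d x y <= h%:E)%E.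

Section Greedy.
Variables (f : nat -> V) (l : nat -> R) (m : nat) (W eps : R).
Hypothesis eps_gt0 : 0 < eps.
Hypothesis dist_le_l : forall i j, (i <= j <= m)%N -> (d (f i) (f j) <= (l j - l i)%:E)%E.
Hypothesis l_step : forall r, (r < m)%N -> l r.+1 - l r <= W.

Let step j := extend_while (fun r => f r \in Ks (f j)) j (m - j).
Let chain i := iter i step 0%N.

Lemma chain_le i : (chain i <= m)%N.
Proof.
elim: i => //= i IH.
have := extend_while_bounds (fun r => f r \in Ks (f (chain i))) (chain i) (m - chain i).
by rewrite /step; lia.
Qed.

Lemma chain_leS i : (chain i <= chain i.+1)%N.
Proof.
by have /andP[] := extend_while_bounds (fun r => f r \in Ks (f (chain i))) (chain i) (m - chain i).
Qed.

Lemma chain_mono : {homo chain : i j / (i <= j)%N}.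
Proof. exact: homo_leq leqnn leq_trans chain_leS. Qed.

Lemma chain_in i r : (chain i < r <= chain i.+1)%N -> f r \in Ks (f (chain i)).
Proof. exact: extend_while_holds. Qed.

Lemma chain_stop i : (chain i.+1 < m)%N -> f (chain i.+1).+1 \notin Ks (f (chain i)).
Proof.
move=> lt; apply: (@extend_while_stop (fun r => f r \in Ks (f (chain i)))).
by rewrite subnKC ?chain_le.
Qed.

Lemma chain_hop_reach i r : (r <= chain i)%N -> hop_reach (f 0%N) i (f r) (l r - l 0%N).
Proof.
elim: i r => [|i IH] r; first by rewrite leqn0 => /eqP ->; rewrite subrr; apply: hop_reach_refl.
have [ri _|ir ri] := leqP r (chain i); first exact: hop_reach_le (leqnSn i) (IH r ri).
apply: hop_reach_step (IH (chain i) (leqnn _)) _ _; first by apply: chain_in; rewrite ir.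
by rewrite opprB addrA subrK dist_le_l // ltnW // (leq_trans ri) ?chain_le.
Qed.

Lemma greedy_cover delta : exists a, [/\ (a <= m)%N,
  forall r, (r <= a)%N -> hop_reach (f 0%N) (max_hops eps) (f r) (l r - l 0%N) &
  (a < m)%N -> (max_hops eps)%:R * delta < l a - l 0%N \/
               exists2 r, (r <= a)%N & exits_Kset_within (f r) (delta + W)].
Proof.
set k := max_hops eps.
exists (chain k); split; [exact: chain_le | by move=> r /chain_hop_reach | move=> ak_m].
have [small|] := lerP (l (chain k) - l 0%N) (k%:R * delta); last by left.
right; have [i ik step_small] := exists_small_step (h := l \o chain) (max_hops_gt0 eps_gt0) small.
have Si_m : (chain i.+1 < m)%N by apply: leq_ltn_trans (chain_mono ik) ak_m.
exists (chain i); first exact: chain_mono (ltnW ik).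
exists (f (chain i.+1).+1); first exact: chain_stop.
apply: le_trans (dist_le_l _) _; first by rewrite (leq_trans (chain_leS i)) ?leqW.
by rewrite lee_fin; have := l_step Si_m; rewrite /= in step_small; lra.
Qed.

End Greedy.

Lemma greedy_cover_rev (f : nat -> V) (l : nat -> R) (m : nat) (W eps delta : R) :
  0 < eps ->
  (forall i j, (i <= j <= m)%N -> (d (f i) (f j) <= (l j - l i)%:E)%E) ->
  (forall r, (r < m)%N -> l r.+1 - l r <= W) ->
  exists b, [/\ (b <= m)%N,
    forall r, (b <= r <= m)%N -> hop_reach (f m) (max_hops eps) (f r) (l m - l r) &
    (0 < b)%N -> (max_hops eps)%:R * delta < l m - l b \/
                 exists2 r, (b <= r <= m)%N & exits_Kset_within (f r) (delta + W)].
Proof.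
move=> eps_gt0 dist_le_l l_step.
have rev_dist i j : (i <= j <= m)%N ->
    (d (f (m - i)%N) (f (m - j)%N) <= ((l m - l (m - j)%N) - (l m - l (m - i)%N))%:E)%E.
  move=> /andP[ij jm]; rewrite dist_sym opprB addrC addrA subrK.
  by apply: dist_le_l; rewrite leq_sub2l ?leq_subr.
have rev_step r : (r < m)%N -> (l m - l (m - r.+1)%N) - (l m - l (m - r)%N) <= W.
  by move=> rm; rewrite -(subnSK rm) opprB addrC addrA subrK; apply: l_step; lia.
have [a [am reach alt]] := greedy_cover eps_gt0 rev_dist rev_step delta.
rewrite subn0 subrr subr0 in reach alt.
exists (m - a)%N; split; first exact: leq_subr.
  by move=> r /andP[ar rm]; have := reach (m - r)%N; rewrite subKn // subr0; apply; lia.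
move=> a_m; have [|lt|[r ra near]] := alt; first by lia.
  by left.
by right; exists (m - r)%N; first lia.
Qed.

Lemma dist_le_oracle eps p s t : (d s t <= oracle adj w Ks eps p s t)%E.
Proof.
rewrite /oracle; case: ifP => _; last exact: leey.
rewrite le_min; apply/andP; split; apply: le_ereal_inf_tmp => _ [v _ <-].
  apply: le_trans (dist_triangle s v t) _; rewrite (dist_sym v t).
  by apply: leeD; apply: dist_le_dH.
rewrite /dpiv; case: (p v) => [b|]; last by rewrite addye ?leey.
by rewrite (dist_sym t b); apply: dist_triangle.
Qed.

Definition hitting_set (B : {set V}) : Prop :=
  forall x y, y \notin Ks x -> exists2 b, b \in Ks x & b \in B.

Section UpperBound.
Variables (K : nat) (eps W : R) (B : {set V}) (p : V -> option V).
Hypothesis eps_gt0 : 0 < eps.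
Hypothesis W_ge0 : 0 <= W.
Hypothesis w_le_W : forall u v, adj u v -> w u v <= W.
Hypothesis Ks_valid : valid_Kset adj w K Ks.
Hypothesis B_hitting : hitting_set B.
Hypothesis p_valid : valid_pivot adj w B p.

Lemma dpiv_le_exits_Kset_within u x h : exits_Kset_within x h ->
  (dpiv adj w p u x <= d u x + h%:E)%E.
Proof.
move=> [y yK dxy]; have [b0 b0K b0B] := B_hitting yK.
rewrite /dpiv; have := p_valid x; case: (p x) => [b [_ b_min]|B0]; last first.
  by move: b0B; rewrite B0 inE.
apply: le_trans (dist_triangle u x b) (leeD2l _ _).
have [_ _ K_closest] := Ks_valid x.
exact: le_trans (b_min _ b0B) (le_trans (K_closest _ _ b0K yK) dxy).
Qed.

Lemma dhat2_le_exits_Kset_within s t x h :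
  (Aset Ks eps s `|` Aset Ks eps t) x -> exits_Kset_within x h ->
  (dhat2 adj w Ks eps p s t <= d s x + d t x + (h + h)%:E)%E.
Proof.
move=> Ax near; apply: le_trans (_ : dpiv adj w p s x + dpiv adj w p t x <= _)%E.
  by apply: ereal_inf_lbound; exists x.
by rewrite EFinD addeACA leeD ?dpiv_le_exits_Kset_within.
Qed.

Lemma min_dhat_le_length (f : nat -> V) (l : nat -> R) (m : nat) :
  (forall i j, (i <= j <= m)%N -> (d (f i) (f j) <= (l j - l i)%:E)%E) ->
  (forall r, (r < m)%N -> l r.+1 - l r <= W) ->
  (Order.min (dhat1 adj w Ks eps (f 0%N) (f m)) (dhat2 adj w Ks eps p (f 0%N) (f m))
    <= ((1 + eps) * (l m - l 0%N) + 2 * W)%:E)%E.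
Proof.
move=> dist_le_l l_step; set k := max_hops eps.
have l_le i j : (i <= j <= m)%N -> l i <= l j.
  by move=> ijm; rewrite -subr_ge0 -lee_fin (le_trans (dist_ge0 _ _) (dist_le_l _ _ ijm)).
have L_ge0 : 0 <= l m - l 0%N by rewrite subr_ge0 l_le ?leqnn.
have k_gt0 : 0 < k%:R :> R by rewrite ltr0n max_hops_gt0.
set delta := (l m - l 0%N) / (2 * k%:R).
have k_delta : k%:R * delta * 2 = l m - l 0%N by rewrite /delta; field; rewrite gt_eqF.
have delta_le : delta * 2 <= eps * (l m - l 0%N).
  by have := max_hops_mul_ge1 eps_gt0; rewrite -/k; nra.
have eps_L : 0 <= eps * (l m - l 0%N) by rewrite mulr_ge0 // ltW.
have [a [am reach_s alt_s]] := greedy_cover eps_gt0 dist_le_l l_step delta.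
have [b [bm reach_t alt_t]] := greedy_cover_rev delta eps_gt0 dist_le_l l_step.
rewrite -/k in alt_s alt_t; rewrite ge_min; apply/orP.
have [ba|ab] := leqP b a.
  have b_bm : (b <= b <= m)%N by rewrite leqnn bm.
  left; apply: le_trans (dhat1_le_hop_reach eps_gt0 (reach_s b ba) (reach_t b b_bm)) _.
  by rewrite lee_fin mulrDl mul1r; move: W_ge0 eps_L; lra.
right; have pivot r : (r <= m)%N ->
    Aset Ks eps (f 0%N) (f r) \/ Aset Ks eps (f m) (f r) -> exits_Kset_within (f r) (delta + W) ->
    (dhat2 adj w Ks eps p (f 0%N) (f m) <= ((1 + eps) * (l m - l 0%N) + 2 * W)%:E)%E.
  move=> rm Ar near; apply: le_trans (dhat2_le_exits_Kset_within Ar near) _.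
  have s_r : (d (f 0%N) (f r) <= (l r - l 0%N)%:E)%E by apply: dist_le_l; rewrite rm.
  have r_t : (d (f r) (f m) <= (l m - l r)%:E)%E by apply: dist_le_l; rewrite rm leqnn.
  rewrite (dist_sym (f m)); apply: le_trans (leeD (leeD s_r r_t) (lexx _)) _.
  by rewrite -!EFinD lee_fin mulrDl mul1r; move: delta_le W_ge0; lra.
have [big_s|[r ra near]] := alt_s (leq_trans ab bm); last first.
  apply: (pivot r) => //; first exact: leq_trans ra am.
  by left; exact: (hop_reach_Aset eps_gt0 (reach_s r ra)).1.
have [big_t|[r /andP[br rm] near]] := alt_t (leq_ltn_trans (leq0n a) ab); last first.
  apply: (pivot r) => //; right.
  by apply: (hop_reach_Aset eps_gt0 (reach_t r _)).1; rewrite br rm.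
have la_lb : l a <= l b by apply: l_le; rewrite (ltnW ab) bm.
by exfalso; move: k_delta big_s big_t la_lb; lra.
Qed.

Lemma oracle_le_dist s t :
  (oracle adj w Ks eps p s t <= (1 + eps)%:E * d s t + (2 * W)%:E)%E.
Proof.
have eps1_gt0 : 0 < 1 + eps by rewrite addr_gt0.
rewrite /oracle connect_dist; case: ifPn => [|st_inf]; last first.
  have -> : d s t = +oo%E by apply/eqP; rewrite -leye_eq leNgt.
  by rewrite gt0_muley ?addye ?leey ?lte_fin.
move: (dist_ge0 s t); case Est: (d s t) => [r| |] // _ _.
apply/lee_addgt0Pr => e e_gt0.
have [q [pq lq wq]] := dist_approx Est (divr_gt0 e_gt0 eps1_gt0).
have walk_step i : (i < size q)%N ->
    walk_weight w s (take i.+1 q) - walk_weight w s (take i q) <= W.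
  move=> iq; rewrite (take_nth s iq) walk_weight_rcons addrAC subrr add0r last_take 1?ltnW //.
  by apply: w_le_W; move/pathP: pq; apply.
have := min_dhat_le_length (l := fun i => walk_weight w s (take i q))
  (dist_le_subwalk pq) walk_step.
rewrite /= -(last_nth s) lq take_size take0 [walk_weight _ _ [::]]/walk_weight big_nil subr0.
move/le_trans; apply.
rewrite -EFinM -!EFinD lee_fin.
have : (1 + eps) * walk_weight w s q <= (1 + eps) * (r + e / (1 + eps)).
  by rewrite ler_wpM2l ?ltW.
by rewrite mulrDr mulrCA divff ?mulr1 ?gt_eqF //; lra.
Qed.

End UpperBound.
End HopWalks.
End Distances.

Lemma good_event_of_hitting (R : realType) (V : finType) (adj : rel V) (w : V -> V -> R)
    (W : R) (K : nat) (eps : R) (Ks : V -> {set V}) (B : {set V}) :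
  symmetric adj -> (forall u v, adj u v -> w u v = w v u) ->
  (forall u v, adj u v -> 0 <= w u v <= W) -> 0 <= W -> 0 < eps ->
  valid_Kset adj w K Ks -> hitting_set Ks B -> good_event adj w Ks eps W B.
Proof.
move=> adj_sym w_sym w_bound W_ge0 eps_gt0 Ks_valid B_hitting p p_valid s t.
have w_ge0 u v : adj u v -> 0 <= w u v by case/w_bound/andP.
have w_le_W u v : adj u v -> w u v <= W by case/w_bound/andP.
split; first by apply: dist_le_oracle.
exact (oracle_le_dist adj_sym w_sym w_ge0 eps_gt0 W_ge0 w_le_W Ks_valid B_hitting p_valid s t).
Qed.


Local Close Scope classical_set_scope.

Section Sampling.
Variables (R : realType) (V : finType) (q : R).
Hypothesis q_ge0 : 0 <= q.
Hypothesis q_le1 : q <= 1.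

Definition sample_weight (B : {set V}) : R := \prod_(x : V) (if x \in B then q else 1 - q).

Lemma sample_weight_ge0 B : 0 <= sample_weight B.
Proof. by apply: prodr_ge0 => x _; case: ifP; rewrite ?subr_ge0. Qed.

Lemma sum_sample_weight : \sum_(B : {set V}) sample_weight B = 1.
Proof.
rewrite /sample_weight -(bigA_distr 1 +%R (fun=> q) (fun=> 1 - q)).
by rewrite big1 // => x _; apply: subrKC.
Qed.

Lemma sample_probE (E : {set V} -> Prop) :
  sample_prob q E = \sum_(B : {set V}) (if `[< E B >] then sample_weight B else 0).
Proof.
apply: eq_bigr => B _; case: ifP => // _.
rewrite /sample_weight (bigID (mem B)) /=.
rewrite (eq_bigr (fun=> q)) => [|x ->] //.
rewrite [X in _ = _ * X](eq_bigr (fun=> 1 - q)) => [|x /negbTE ->] //.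
rewrite prodr_const -[\prod_(x | x \notin B) _]/(\prod_(x in [predC B]) (1 - q)) prodr_const.
by rewrite -(cardC B) addKn.
Qed.

Lemma sample_prob_le (E1 E2 : {set V} -> Prop) : (forall B, E1 B -> E2 B) ->
  sample_prob q E1 <= sample_prob q E2.
Proof.
move=> E12; rewrite !sample_probE; apply: ler_sum => B _.
case: (asboolP (E1 B)) => [/E12 e2|_]; first by rewrite asboolT.
by case: ifP; rewrite ?sample_weight_ge0.
Qed.

Lemma sample_prob_disjoint (S : {set V}) :
  sample_prob q (fun B => [disjoint S & B]) = (1 - q) ^+ #|S|.
Proof.
pose F x := if x \in S then 0 else q.
transitivity (\prod_(x : V) (F x + (1 - q))).
  rewrite sample_probE (bigA_distr 1 +%R F (fun=> 1 - q)); apply: eq_bigr => B _.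
  case: (asboolP [disjoint S & B]) => [SB|/negP].
    by apply: eq_bigr => x _; rewrite /F; case: ifP => // xB; rewrite (disjointFl SB xB).
  rewrite -setI_eq0 => /set0Pn[x]; rewrite inE => /andP[xS xB].
  by rewrite (bigD1 x) //= /F xS xB mul0r.
rewrite (bigID (mem S)) /= (eq_bigr (fun=> 1 - q)) => [|x]; last by rewrite /F => ->; rewrite add0r.
rewrite prodr_const big1 ?mulr1 // => x /negbTE xS.
by rewrite /F xS addrC subrK.
Qed.

Lemma sample_prob_union_bound (E : {set V} -> Prop) (bad : V -> {set V} -> Prop) :
  (forall B, (forall x, ~ bad x B) -> E B) ->
  1 - \sum_(x : V) sample_prob q (bad x) <= sample_prob q E.
Proof.
move=> good; under eq_bigr => x _ do rewrite sample_probE.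
rewrite sample_probE exchange_big /= -sum_sample_weight -sumrB; apply: ler_sum => B _.
have bad_ge0 : 0 <= \sum_(x : V) (if `[< bad x B >] then sample_weight B else 0).
  by apply: sumr_ge0 => x _; case: ifP; rewrite ?sample_weight_ge0.
case: (asboolP (E B)) => [_|notE]; first by rewrite lerBlDr lerDl.
have [x bad_x] : exists x, bad x B.
  by apply: contra_notP notE => no_bad; apply: good => x bad_x; apply: no_bad; exists x.
rewrite (bigD1 x) //= asboolT // opprD addrA subrr add0r oppr_le0.
by apply: sumr_ge0 => y _; case: ifP; rewrite ?sample_weight_ge0.
Qed.

End Sampling.

Lemma one_sub_min_le_expR (R : realType) (X : R) : 1 - Num.min 1 X <= expR (- X).
Proof. by have [_|_] := leP 1 X; rewrite ?subrr ?expR_ge0 ?expR_ge1Dx. Qed.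

Lemma natr_mul_expr_le_powR (R : realType) (n K : nat) (C : R) : (0 < K)%N ->
  n%:R * (1 - Num.min 1 (C * ln n%:R / K%:R)) ^+ K <= n%:R `^ (1 - C).
Proof.
move=> K_gt0; have [->|n_gt0] := posnP n; first by rewrite mul0r powR_ge0.
set X := C * ln n%:R / K%:R.
have miss_ge0 : 0 <= 1 - Num.min 1 X by rewrite subr_ge0 ge_min lexx.
have -> : n%:R `^ (1 - C) = n%:R * expR (- X) ^+ K.
  rewrite -expRM_natr /powR gt_eqF ?ltr0n // -{2}(lnK (_ : n%:R \in Num.pos)) -?expRD.
    by congr expR; rewrite /X; field; rewrite pnatr_eq0 -lt0n.
  by rewrite posrE ltr0n.
by rewrite ler_wpM2l // lerXn2r ?nnegrE ?expR_ge0 ?one_sub_min_le_expR.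
Qed.

Definition misses_Kset (V : finType) (Ks : V -> {set V}) (x : V) (B : {set V}) : Prop :=
  (exists y, y \notin Ks x) /\ [disjoint Ks x & B].

Lemma hitting_set_of_no_miss (V : finType) (Ks : V -> {set V}) (B : {set V}) :
  (forall x, ~ misses_Kset Ks x B) -> hitting_set Ks B.
Proof.
move=> no_miss x y yK; have /negP : ~ [disjoint Ks x & B].
  by move=> dis; apply: (no_miss x); split; first exists y.
by rewrite -setI_eq0 => /set0Pn[b]; rewrite inE => /andP[]; exists b.
Qed.

Lemma sample_prob_misses_Kset_le (R : realType) (V : finType) (adj : rel V) (w : V -> V -> R)
    (K : nat) (Ks : V -> {set V}) (q : R) x :
  0 <= q <= 1 -> valid_Kset adj w K Ks -> sample_prob q (misses_Kset Ks x) <= (1 - q) ^+ K.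
Proof.
move=> /andP[q_ge0 q_le1] Ks_valid.
have [[y yK]|Ks_full] := pselect (exists y, y \notin Ks x); last first.
  rewrite sample_probE big1 ?exprn_ge0 ?subr_ge0 // => B _.
  by rewrite asboolF // => -[].
apply: le_trans (sample_prob_le q_ge0 q_le1 (E2 := fun B => [disjoint Ks x & B]) _) _.
  by move=> B [].
have [_ card_Ks _] := Ks_valid x.
have card_K : #|Ks x| = K.
  have : (0 < #|~: Ks x|)%N by apply/card_gt0P; exists y; rewrite inE.
  by have := cardsC (Ks x); rewrite card_Ks; lia.
by rewrite sample_prob_disjoint // card_K.
Qed.

Theorem lemma9 (R : realType) :
  exists C0 : R, 0 < C0 /\
  forall C : R, C0 <= C ->
  exists c : R, 0 < c /\
  forall (V : finType) (adj : rel V) (w : V -> V -> R) (W : R) (K : nat) (eps : R),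
    symmetric adj ->
    (forall u v, adj u v -> w u v = w v u) ->
    (forall u v, adj u v -> 0 <= w u v <= W) ->
    0 <= W ->
    (0 < K)%N ->
    0 < eps ->
    forall Ks : V -> {set V}, valid_Kset adj w K Ks ->
    sample_prob (Num.min 1 (C * ln (#|V|%:R) / K%:R)) (good_event adj w Ks eps W)
      >= 1 - (#|V|%:R) `^ (- c).
Proof.
exists 2; split=> // C C_ge2; exists (C - 1); split; first by lra.
move=> V adj w W K eps adj_sym w_sym w_bound W_ge0 K_gt0 eps_gt0 Ks Ks_valid.
set q := Num.min 1 _.
have X_ge0 : 0 <= C * ln #|V|%:R / K%:R.
  rewrite divr_ge0 ?mulr_ge0 //; first lra.
  have [->|V_gt0] := posnP #|V|; first by rewrite mulr0n ln0.
  by rewrite ln_ge0 // ler1n.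
have q01 : 0 <= q <= 1 by rewrite ge_min lexx le_min ler01 X_ge0.
have /andP[q_ge0 q_le1] := q01.
have sum_missed : \sum_(x : V) sample_prob q (misses_Kset Ks x) <= #|V|%:R * (1 - q) ^+ K.
  apply: le_trans (ler_sum _ (fun x _ => sample_prob_misses_Kset_le x q01 Ks_valid)) _.
  by rewrite sumr_const mulr_natl.
apply: le_trans (sample_prob_union_bound q_ge0 q_le1 (bad := misses_Kset Ks) _).
  rewrite lerD2l lerN2 opprB; apply: le_trans sum_missed (natr_mul_expr_le_powR _ _ K_gt0).
by move=> B /hitting_set_of_no_miss; apply: good_event_of_hitting.
Qed.
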